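(* For $\beta\ge4$, the quantum query complexity of the following task is $\Omega(\beta)$: given a block-encoding $U$ of $\sqrt{H}$ for a Hamiltonian $H$, prepare a quantum state $\rho$ with $\|\rho-e^{-\beta H}/\mathcal{Z}\|_1\le 0.01$, where $\mathcal Z=\operatorname{tr}(e^{-\beta H})$.
   Context: A block-encoding of a matrix $A$ is a unitary $U$ whose upper-left block equals $A$. One query means one application of $U$, $U^\dagger$, or their controlled versions. $\|\cdot\|_1$ is the trace norm. The query complexity is the minimum number of queries of a quantum algorithm that achieves the stated preparation (succeeding for every valid $H$). *)

From mathcomp Require Import all_boot all_order all_algebra.
From mathcomp Require Import reals.
From mathcomp Require Import sequences exp.
From mathcomp Require Import complex mxtens.

Set Implicit Arguments.
Unset Strict Implicit.
Unset Printing Implicit Defensive.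

Import Order.TTheory GRing.Theory Num.Theory.
Local Open Scope ring_scope.

Section QuantumDefs.
Variable R : realType.
Local Notation C := R[i].

Definition mxadj m n (A : 'M[C]_(m, n)) : 'M[C]_(n, m) := (map_mx (@conjc R) A)^T.

Definition unitary n (U : 'M[C]_n) : Prop := U *m mxadj U = 1%:M /\ mxadj U *m U = 1%:M.

Definition isometry m n (W : 'M[C]_(m, n)) : Prop := mxadj W *m W = 1%:M.

Definition orth_proj n (P : 'M[C]_n) : Prop := P *m P = P /\ mxadj P = P.

Definition rdiag n (lam : 'rV[R]_n) : 'M[C]_n := diag_mx (map_mx (real_complex R) lam).

Definition spectral n (H : 'M[C]_n) (V : 'M[C]_n) (lam : 'rV[R]_n) : Prop :=
  unitary V /\ H = V *m rdiag lam *m mxadj V.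

(* G = f(H) in the sense of the functional calculus for a Hermitian H *)
Definition mxfun n (f : R -> R) (H G : 'M[C]_n) : Prop :=
  exists V lam, spectral H V lam /\ G = V *m rdiag (map_mx f lam) *m mxadj V.

Definition psd n (A : 'M[C]_n) : Prop :=
  exists V lam, spectral A V lam /\ forall i, 0 <= lam 0 i.

Definition is_sqrt n (S H : 'M[C]_n) : Prop := psd S /\ S *m S = H.

Definition block_encoding N k (U : 'M[C]_(N + k)) (A : 'M[C]_N) : Prop :=
  unitary U /\ ulsubmx U = A.

(* t = ||X||_1 (sum of singular values = sum of sqrt of eigenvalues of X^* X) *)
Definition trnorm n (X : 'M[C]_n) (t : R) : Prop :=
  exists V mu, spectral (mxadj X *m X) V mu /\ t = \sum_i Num.sqrt (mu 0 i).

(* partial trace over the second tensor factor (tensor index convention of mxtens) *)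
Definition ptrace2 n r (X : 'M[C]_(n * r)) : 'M[C]_n :=
  \matrix_(i, j) \sum_(a < r) X (mxtens_index (i, a)) (mxtens_index (j, a)).

(* Workspace C^(N+k) (oracle register) (x) C^m (ancillas).
   State: V_T Q_(T-1) V_(T-1) ... Q_0 V_0 x0, where query j is
   Q_j = U_j (x) P_j + I (x) (I - P_j), with U_j = U or U^* (as chosen by dag j)
   and P_j an orthogonal projector on the ancilla (P_j = I : uncontrolled query,
   P_j = |1><1| on a control qubit : controlled query).
   The output state is obtained by a final isometry W into C^N (x) C^r and tracing
   out C^r. *)
Record query_alg (N k : nat) := QueryAlg {
  qa_m : nat;
  qa_r : nat;
  qa_T : nat;
  qa_x0 : 'cV[C]_((N + k) * qa_m);
  qa_V : nat -> 'M[C]_((N + k) * qa_m);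
  qa_P : nat -> 'M[C]_qa_m;
  qa_dag : nat -> bool;
  qa_W : 'M[C]_(N * qa_r, (N + k) * qa_m)
}.

Definition query_alg_wf N k (A : query_alg N k) : Prop :=
  mxadj (qa_x0 A) *m qa_x0 A = 1%:M /\
  (forall t, (t <= qa_T A)%N -> unitary (qa_V A t)) /\
  (forall t, (t < qa_T A)%N -> orth_proj (qa_P A t)) /\
  isometry (qa_W A).

Definition query_op N k (A : query_alg N k) (U : 'M[C]_(N + k)) (t : nat)
  : 'M[C]_((N + k) * qa_m A) :=
  (if qa_dag A t then mxadj U else U) *t qa_P A t + (1%:M : 'M[C]_(N + k)) *t (1%:M - qa_P A t).

Fixpoint qa_state N k (A : query_alg N k) (U : 'M[C]_(N + k)) (t : nat)
  : 'cV[C]_((N + k) * qa_m A) :=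
  match t with
  | 0 => qa_V A 0 *m qa_x0 A
  | t'.+1 => qa_V A t *m (query_op A U t' *m qa_state A U t')
  end.

Definition qa_output N k (A : query_alg N k) (U : 'M[C]_(N + k)) : 'M[C]_N :=
  let psi := qa_W A *m qa_state A U (qa_T A) in
  ptrace2 (psi *m mxadj psi).

Definition prepares_gibbs N k (beta : R) (A : query_alg N k) : Prop :=
  forall (H S : 'M[C]_N) (U : 'M[C]_(N + k)) (G : 'M[C]_N),
    is_sqrt S H -> block_encoding U S ->
    mxfun (fun x => expR (- (beta * x))) H G ->
    exists t, trnorm (qa_output A U - (\tr G)^-1 *: G) t /\ t <= 1 / 100%:R.

End QuantumDefs.

(* Take sqrt H = diag (3/5, c).  For c = 3/5 the Gibbs state puts weight 1/2 on the first
   level, while for c^2 = (3/5)^2 + 1/beta the energy gap 1/beta gives it weight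
   1 / (1 + e^-1) >= 2/3.  A real diagonal contraction diag a with a^2 + b^2 = 1 is
   block-encoded by the reflection [[diag a, diag b], [diag b, -diag a]] (padded by the
   identity), and for the two choices of c these encodings differ by an operator of norm at
   most 3/beta.  By the hybrid argument T queries move the final state by at most 3T/beta,
   hence the first diagonal entry of the reduced output by at most 6T/beta, whereas two
   0.01-accurate outputs must differ there by at least 1/6 - 2/100.  So T >= 11 beta / 450. *)

From mathcomp Require Import all_boot all_order all_algebra.
From mathcomp Require Import reals.
From mathcomp Require Import sequences exp.
From mathcomp Require Import complex mxtens.
From mathcomp Require Import ring lra.
Import Order.TTheory GRing.Theory Num.Theory.
Set Implicit Arguments.
Unset Strict Implicit.
Unset Printing Implicit Defensive.
Local Open Scope ring_scope.

Section TensorProduct.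
Variable F : pzRingType.

Lemma tensmxDr m n p q (A : 'M[F]_(m, n)) (B D : 'M[F]_(p, q)) :
  A *t (B + D) = A *t B + A *t D.
Proof. by apply/matrixP => i j; rewrite !mxE mulrDr. Qed.

Lemma tensmxBl m n p q (A B : 'M[F]_(m, n)) (D : 'M[F]_(p, q)) :
  (A - B) *t D = A *t D - B *t D.
Proof. by apply/matrixP => i j; rewrite !mxE mulrBl. Qed.

Lemma tensmxZl m n p q (a : F) (A : 'M[F]_(m, n)) (D : 'M[F]_(p, q)) :
  (a *: A) *t D = a *: (A *t D).
Proof. by apply/matrixP => i j; rewrite !mxE mulrA. Qed.

Lemma tensmx11 m n : (1%:M : 'M[F]_m) *t (1%:M : 'M[F]_n) = 1%:M.
Proof.
apply/matrixP => i j; rewrite !mxE -natrM mulnb -xpair_eqE -!surjective_pairing.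
by rewrite (inj_eq (can_inj (@mxtens_unindexK m n))).
Qed.

End TensorProduct.

Section Adjoint.
Variable R : realType.
Local Notation C := R[i].

Lemma mxadjE m n (A : 'M[C]_(m, n)) i j : mxadj A j i = conjc (A i j).
Proof. by rewrite !mxE. Qed.

Lemma mxadjK m n (A : 'M[C]_(m, n)) : mxadj (mxadj A) = A.
Proof. by apply/matrixP => i j; rewrite !mxadjE conjcK. Qed.

Lemma mxadjM m n p (A : 'M[C]_(m, n)) (B : 'M[C]_(n, p)) :
  mxadj (A *m B) = mxadj B *m mxadj A.
Proof. by rewrite /mxadj map_mxM trmx_mul. Qed.

Lemma mxadjD m n (A B : 'M[C]_(m, n)) : mxadj (A + B) = mxadj A + mxadj B.
Proof. by rewrite /mxadj map_mxD linearD. Qed.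

Lemma mxadjB m n (A B : 'M[C]_(m, n)) : mxadj (A - B) = mxadj A - mxadj B.
Proof. by rewrite /mxadj map_mxB linearB. Qed.

Lemma mxadj1 n : mxadj (1%:M : 'M[C]_n) = 1%:M.
Proof. by rewrite /mxadj map_mx1 trmx1. Qed.

Lemma mxadj_tens m n p q (A : 'M[C]_(m, n)) (B : 'M[C]_(p, q)) :
  mxadj (A *t B) = mxadj A *t mxadj B.
Proof. by rewrite /mxadj map_mxT trmx_tens. Qed.

Lemma mxadj_real m n (A : 'M[R]_(m, n)) :
  mxadj (map_mx (real_complex R) A) = map_mx (real_complex R) A^T.
Proof. by apply/matrixP => i j; rewrite !mxE /conjc /= oppr0. Qed.

Lemma orth_proj_tens m n (E : 'M[C]_m) (P : 'M[C]_n) :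
  orth_proj E -> orth_proj P -> orth_proj (E *t P).
Proof. by move=> [EE Ea] [PP Pa]; rewrite /orth_proj tensmx_mul EE PP mxadj_tens Ea Pa. Qed.

Lemma orth_proj_rdiag n (v : 'rV[R]_n) :
  (forall i, v 0 i * v 0 i = v 0 i) -> orth_proj (rdiag v).
Proof.
move=> v01; split; last first.
  by rewrite /rdiag -map_diag_mx mxadj_real tr_diag_mx.
rewrite /rdiag mulmx_diag; congr diag_mx; apply/rowP => i.
by rewrite !mxE -rmorphM v01.
Qed.

Lemma controlled_isometry m n (V : 'M[C]_m) (P : 'M[C]_n) :
  mxadj V *m V = 1%:M -> orth_proj P ->
  mxadj (V *t P + 1%:M *t (1%:M - P)) *m (V *t P + 1%:M *t (1%:M - P)) = 1%:M.
Proof.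
move=> VV [PP Pa].
have PQ : P *m (1%:M - P) = 0 by rewrite mulmxBr mulmx1 PP subrr.
have QP : (1%:M - P) *m P = 0 by rewrite mulmxBl mul1mx PP subrr.
have QQ : (1%:M - P) *m (1%:M - P) = 1%:M - P by rewrite mulmxBr mulmx1 QP subr0.
rewrite mxadjD !mxadj_tens mxadjB !mxadj1 Pa mulmxDl !mulmxDr !tensmx_mul.
by rewrite VV PP PQ QP QQ !tensmx0 addr0 add0r !mulmx1 -tensmxDr addrC subrK tensmx11.
Qed.

End Adjoint.

Section VectorNorm.
Variable R : realType.
Local Notation C := R[i].
Local Notation "x %:C" := (real_complex R x).

Definition normc2 (z : C) : R := complex.Re z ^+ 2 + complex.Im z ^+ 2.

Definition dotr n (x y : 'cV[C]_n) : R :=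
  \sum_i (complex.Re (x i 0) * complex.Re (y i 0) + complex.Im (x i 0) * complex.Im (y i 0)).

Definition vnorm2 n (x : 'cV[C]_n) : R := \sum_i normc2 (x i 0).

Definition vnorm n (x : 'cV[C]_n) : R := Num.sqrt (vnorm2 x).

Lemma normc2_ge0 z : 0 <= normc2 z.
Proof. by rewrite addr_ge0 ?sqr_ge0. Qed.

Lemma mul_conjc z : conjc z * z = (normc2 z)%:C.
Proof.
by case: z => a b; apply/eqP; rewrite eq_complex /normc2 /=; apply/andP; split; apply/eqP; ring.
Qed.

Lemma vnorm2_ge0 n (x : 'cV[C]_n) : 0 <= vnorm2 x.
Proof. by apply: sumr_ge0 => i _; apply: normc2_ge0. Qed.

Lemma vnorm_ge0 n (x : 'cV[C]_n) : 0 <= vnorm x.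
Proof. exact: sqrtr_ge0. Qed.

Lemma sqr_vnorm n (x : 'cV[C]_n) : vnorm x ^+ 2 = vnorm2 x.
Proof. by rewrite sqr_sqrtr ?vnorm2_ge0. Qed.

Lemma vnorm0 n : vnorm (0 : 'cV[C]_n) = 0.
Proof. by rewrite /vnorm /vnorm2 big1 ?sqrtr0 // => i _; rewrite mxE /normc2 /= expr0n addr0. Qed.

Lemma dotrE n (x y : 'cV[C]_n) : dotr x y = complex.Re ((mxadj x *m y) 0 0).
Proof.
rewrite mxE raddf_sum; apply: eq_bigr => i _; rewrite mxadjE.
by case: (x i 0) => a b; case: (y i 0) => c d /=; ring.
Qed.

Lemma mxadj_mul_self n (x : 'cV[C]_n) : (mxadj x *m x) 0 0 = (vnorm2 x)%:C.
Proof. by rewrite mxE rmorph_sum; apply: eq_bigr => i _; rewrite mxadjE mul_conjc. Qed.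

Lemma vnorm2_scaleDr n (t : R) (x y : 'cV[C]_n) :
  vnorm2 (t%:C *: x + y) = t ^+ 2 * vnorm2 x + 2 * t * dotr x y + vnorm2 y.
Proof.
rewrite /vnorm2 /dotr !mulr_sumr -!big_split; apply: eq_bigr => i _ /=.
by rewrite !mxE; case: (x i 0) => a b; case: (y i 0) => c d; rewrite /normc2 /=; ring.
Qed.

Lemma vnorm2D n (x y : 'cV[C]_n) :
  vnorm2 (x + y) = vnorm2 x + 2 * dotr x y + vnorm2 y.
Proof. by have := vnorm2_scaleDr 1 x y; rewrite rmorph1 scale1r expr1n !mul1r mulr1. Qed.

Lemma dotr_le n (x y : 'cV[C]_n) : dotr x y <= vnorm x * vnorm y.
Proof.
pose p := \poly_(i < 3) [:: vnorm2 y; 2 * dotr x y; vnorm2 x]`_i.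
have p_ge0 t : 0 <= p.[t].
  rewrite horner_poly !big_ord_recr big_ord0 /= add0r mulr1 expr1.
  have -> : vnorm2 y + 2 * dotr x y * t + vnorm2 x * t ^+ 2
            = t ^+ 2 * vnorm2 x + 2 * t * dotr x y + vnorm2 y by ring.
  by rewrite -vnorm2_scaleDr vnorm2_ge0.
have := deg_le2_poly_ge0 (size_poly _ _) p_ge0; rewrite !coef_poly /= => disc.
have d2 : dotr x y ^+ 2 <= (vnorm x * vnorm y) ^+ 2 by rewrite exprMn !sqr_vnorm; nra.
apply: le_trans (ler_norm _) _.
by rewrite -ler_sqr ?nnegrE ?mulr_ge0 ?vnorm_ge0 // real_normK ?num_real.
Qed.

Lemma vnormD n (x y : 'cV[C]_n) : vnorm (x + y) <= vnorm x + vnorm y.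
Proof.
rewrite -ler_sqr ?nnegrE ?addr_ge0 ?vnorm_ge0 // sqr_vnorm vnorm2D sqrrD !sqr_vnorm.
have := dotr_le x y; lra.
Qed.

Lemma vnorm2N n (x : 'cV[C]_n) : vnorm2 (- x) = vnorm2 x.
Proof.
by apply: eq_bigr => i _; rewrite mxE; case: (x i 0) => a b; rewrite /normc2 /= !sqrrN.
Qed.

Lemma vnorm_sym n (x y : 'cV[C]_n) : vnorm (x - y) = vnorm (y - x).
Proof. by rewrite -opprB /vnorm vnorm2N. Qed.

Lemma vnorm2_isometry m n (M : 'M[C]_(m, n)) (x : 'cV[C]_n) :
  mxadj M *m M = 1%:M -> vnorm2 (M *m x) = vnorm2 x.
Proof.
move=> MM; have := mxadj_mul_self (M *m x).
by rewrite mxadjM -mulmxA (mulmxA (mxadj M)) MM mul1mx mxadj_mul_self => -[].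
Qed.

Lemma vnorm_isometry m n (M : 'M[C]_(m, n)) (x : 'cV[C]_n) :
  mxadj M *m M = 1%:M -> vnorm (M *m x) = vnorm x.
Proof. by move=> MM; rewrite /vnorm vnorm2_isometry. Qed.

Lemma vnorm2_proj n (P : 'M[C]_n) (x : 'cV[C]_n) :
  orth_proj P -> vnorm2 (P *m x) <= vnorm2 x.
Proof.
move=> [PP Pa].
have split_x : x = P *m x + (1%:M - P) *m x by rewrite mulmxBl mul1mx addrC subrK.
have orth : dotr (P *m x) ((1%:M - P) *m x) = 0.
  by rewrite dotrE mxadjM Pa -mulmxA (mulmxA P) mulmxBr mulmx1 PP subrr mul0mx mulmx0 mxE.
by rewrite [in leRHS]split_x vnorm2D orth mulr0 addr0 lerDl vnorm2_ge0.
Qed.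

Lemma vnorm_contraction m n (M : 'M[C]_(m, n)) (P : 'M[C]_n) (d e : R) (x : 'cV[C]_n) :
  0 <= d <= e ^+ 2 -> 0 <= e -> orth_proj P -> mxadj M *m M = d%:C *: P ->
  vnorm (M *m x) <= e * vnorm x.
Proof.
move=> /andP[d_ge0 d_le] e_ge0 [PP Pa] MM.
have xPx : mxadj x *m (P *m x) = mxadj (P *m x) *m (P *m x).
  by rewrite mxadjM Pa -mulmxA (mulmxA P) PP.
have MxP : vnorm2 (M *m x) = d * vnorm2 (P *m x).
  have := mxadj_mul_self (M *m x).
  rewrite mxadjM -mulmxA (mulmxA (mxadj M)) MM -scalemxAl -scalemxAr mxE.
  by rewrite xPx mxadj_mul_self -rmorphM => -[].
rewrite -ler_sqr ?nnegrE ?mulr_ge0 ?vnorm_ge0 // exprMn !sqr_vnorm MxP.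
by rewrite ler_pM ?vnorm2_ge0 ?vnorm2_proj.
Qed.

Lemma vnorm2_lipschitz n (x y : 'cV[C]_n) :
  vnorm x <= 1 -> vnorm y <= 1 -> `|vnorm2 x - vnorm2 y| <= 2 * vnorm (x - y).
Proof.
move=> x1 y1.
have xy := vnormD (x - y) y; rewrite subrK in xy.
have yx := vnormD (y - x) x; rewrite subrK -vnorm_sym in yx.
have := vnorm_ge0 x; have := vnorm_ge0 y; rewrite -!sqr_vnorm ler_norml => ? ?.
apply/andP; split; nra.
Qed.

End VectorNorm.

Lemma sum_sqr_le (F : numDomainType) (I : finType) (f : I -> F) :
  (forall i, 0 <= f i) -> \sum_i f i ^+ 2 <= (\sum_i f i) ^+ 2.
Proof.
move=> f_ge0; rewrite [leRHS]expr2 mulr_suml; apply: ler_sum => i _.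
by rewrite expr2 ler_wpM2l // (bigD1 i) //= lerDl sumr_ge0.
Qed.

Section TraceNorm.
Variable R : realType.
Local Notation C := R[i].
Local Notation "x %:C" := (real_complex R x).

Lemma mxadj_mul_diag m n (M : 'M[C]_(m, n)) j :
  (mxadj M *m M) j j = (\sum_i normc2 (M i j))%:C.
Proof. by rewrite mxE rmorph_sum; apply: eq_bigr => i _; rewrite mxadjE mul_conjc. Qed.

Lemma mul_mxadj_diag m n (M : 'M[C]_(m, n)) i :
  (M *m mxadj M) i i = (\sum_j normc2 (M i j))%:C.
Proof. by rewrite mxE rmorph_sum; apply: eq_bigr => j _; rewrite mxadjE mulrC mul_conjc. Qed.

Lemma conj_rdiag_diag n (V : 'M[C]_n) (mu : 'rV[R]_n) i :
  (V *m rdiag mu *m mxadj V) i i = (\sum_k mu 0 k * normc2 (V i k))%:C.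
Proof.
rewrite /rdiag mul_mx_diag mxE rmorph_sum; apply: eq_bigr => k _.
by rewrite mxadjE !mxE rmorphM mulrAC mulrC [_ * conjc _]mulrC mul_conjc.
Qed.

Lemma trnorm_diag_le n (X : 'M[C]_n) (t : R) i :
  trnorm X t -> `|complex.Re (X i i)| <= t.
Proof.
move=> [V [mu [[[VV1 VV2] XX] ->]]].
(* |X_ii|^2 <= (X^* X)_ii <= sum_k mu_k <= (sum_k sqrt mu_k)^2 *)
have mu_ge0 k : 0 <= mu 0 k.
  have XVXV : mxadj (X *m V) *m (X *m V) = rdiag mu.
    by rewrite mxadjM -mulmxA (mulmxA (mxadj X)) XX !mulmxA VV2 mul1mx -mulmxA VV2 mulmx1.
  have := mxadj_mul_diag (X *m V) k; rewrite XVXV !mxE eqxx mulr1n => -[->].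
  by apply: sumr_ge0 => j _; apply: normc2_ge0.
have V_row k : normc2 (V i k) <= 1.
  have := mul_mxadj_diag V i; rewrite VV1 mxE eqxx => -[->].
  by rewrite (bigD1 k) //= lerDl sumr_ge0 // => j _; apply: normc2_ge0.
have Xii : normc2 (X i i) <= \sum_k mu 0 k * normc2 (V i k).
  have := mxadj_mul_diag X i; rewrite XX conj_rdiag_diag => -[->].
  by rewrite (bigD1 i) //= lerDl sumr_ge0 // => j _; apply: normc2_ge0.
have mu_sum : \sum_k mu 0 k * normc2 (V i k) <= (\sum_k Num.sqrt (mu 0 k)) ^+ 2.
  apply: le_trans (sum_sqr_le (fun k => sqrtr_ge0 (mu 0 k))).
  by apply: ler_sum => k _; rewrite sqr_sqrtr // ler_piMr.
have t_ge0 : 0 <= \sum_k Num.sqrt (mu 0 k) by apply: sumr_ge0 => k _; apply: sqrtr_ge0.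
rewrite -ler_sqr ?nnegrE // real_normK ?num_real //.
by apply: le_trans mu_sum; apply: le_trans Xii; rewrite lerDl sqr_ge0.
Qed.

End TraceNorm.

Section PartialTrace.
Variable R : realType.
Local Notation C := R[i].
Local Notation "x %:C" := (real_complex R x).

Definition slice N r (i : 'I_N) (y : 'cV[C]_(N * r)) : 'cV[C]_r :=
  \col_a y (mxtens_index (i, a)) 0.

Lemma ptrace2_outer_diag N r (y : 'cV[C]_(N * r)) i :
  ptrace2 (y *m mxadj y) i i = (vnorm2 (slice i y))%:C.
Proof.
rewrite mxE rmorph_sum; apply: eq_bigr => a _.
by rewrite mxE big_ord1 mxadjE mulrC mul_conjc !mxE.
Qed.

Lemma sliceB N r (i : 'I_N) (x y : 'cV[C]_(N * r)) : slice i (x - y) = slice i x - slice i y.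
Proof. by apply/matrixP => a j; rewrite !mxE. Qed.

Lemma vnorm_slice N r (i : 'I_N) (y : 'cV[C]_(N * r)) : vnorm (slice i y) <= vnorm y.
Proof.
rewrite ler_sqrt ?vnorm2_ge0 //.
have -> : vnorm2 (slice i y) = \sum_a normc2 (y (mxtens_index (i, a)) 0).
  by apply: eq_bigr => a _; rewrite mxE.
rewrite /vnorm2 (reindex (@mxtens_index N r)) /=; last first.
  by exists (@mxtens_unindex N r) => ? _; rewrite ?mxtens_indexK ?mxtens_unindexK.
rewrite (eq_bigr (fun p => normc2 (y (mxtens_index (p.1, p.2)) 0))); last by case.
rewrite -(pair_bigA _ (fun j a => normc2 (y (mxtens_index (j, a)) 0))) /=.
rewrite (bigD1 i) //= lerDl sumr_ge0 // => j _.
by apply: sumr_ge0 => a _; apply: normc2_ge0.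
Qed.

Lemma ptrace2_outer_diag_dist N r (x y : 'cV[C]_(N * r)) i :
  vnorm x <= 1 -> vnorm y <= 1 ->
  `|complex.Re (ptrace2 (x *m mxadj x) i i) - complex.Re (ptrace2 (y *m mxadj y) i i)|
    <= 2 * vnorm (x - y).
Proof.
move=> x1 y1; rewrite !ptrace2_outer_diag /=.
apply: le_trans (vnorm2_lipschitz _ _) _.
- exact: le_trans (vnorm_slice _ _) x1.
- exact: le_trans (vnorm_slice _ _) y1.
by rewrite ler_pM2l // -sliceB vnorm_slice.
Qed.

End PartialTrace.

Section QueryAlgorithm.
Variables (R : realType) (N k : nat).
Local Notation C := R[i].
Local Notation "x %:C" := (real_complex R x).
Implicit Types (A : query_alg R N k) (U : 'M[C]_(N + k)).

Definition queries_close A U1 U2 (eps : R) := forall t, (t < qa_T A)%N -> forall x,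
  vnorm ((query_op A U1 t - query_op A U2 t) *m x) <= eps * vnorm x.

Lemma query_op_isometry A U t :
  unitary U -> orth_proj (qa_P A t) -> mxadj (query_op A U t) *m query_op A U t = 1%:M.
Proof.
move=> [UU UU'] Pt; apply: controlled_isometry Pt.
by case: (qa_dag A t); rewrite ?mxadjK.
Qed.

Lemma qa_state_vnorm A U t :
  query_alg_wf A -> unitary U -> (t <= qa_T A)%N -> vnorm (qa_state A U t) = 1.
Proof.
move=> [x0_unit [V_unitary [P_proj _]]] U_unitary.
elim: t => [_ | t IH lt_tT] /=.
  have [_ V0] := V_unitary 0%N isT.
  rewrite vnorm_isometry // /vnorm.
  have := mxadj_mul_self (qa_x0 A); rewrite x0_unit mxE => -[<-].
  by rewrite sqrtr1.
have [_ Vt] := V_unitary t.+1 lt_tT.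
rewrite vnorm_isometry //.
rewrite vnorm_isometry; last exact: query_op_isometry (P_proj _ lt_tT).
exact: IH (ltnW lt_tT).
Qed.

Lemma hybrid_bound A U1 U2 (eps : R) :
  query_alg_wf A -> unitary U1 -> unitary U2 -> queries_close A U1 U2 eps ->
  forall t, (t <= qa_T A)%N ->
  vnorm (qa_state A U1 t - qa_state A U2 t) <= t%:R * eps.
Proof.
move=> wfA U1_unitary U2_unitary Q_dist.
have [_ [V_unitary [P_proj _]]] := wfA.
elim => [_ | t IH lt_tT] /=; first by rewrite subrr vnorm0 mul0r.
have [_ Vt] := V_unitary t.+1 lt_tT.
have Q1_iso := query_op_isometry U1_unitary (P_proj t lt_tT).
set Q1 := query_op A U1 t; set Q2 := query_op A U2 t.
set p1 := qa_state A U1 t; set p2 := qa_state A U2 t.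
have -> : qa_V A t.+1 *m (Q1 *m p1) - qa_V A t.+1 *m (Q2 *m p2) =
          qa_V A t.+1 *m (Q1 *m (p1 - p2) + (Q1 - Q2) *m p2).
  by rewrite -mulmxBr; congr (_ *m _); rewrite mulmxBr mulmxBl addrA subrK.
rewrite vnorm_isometry //; apply: le_trans (vnormD _ _) _.
rewrite vnorm_isometry // mulrSr mulrDl mul1r.
apply: lerD; first exact: IH (ltnW lt_tT).
by have := Q_dist t lt_tT p2; rewrite qa_state_vnorm ?mulr1 // ltnW.
Qed.

Lemma qa_output_diag_dist A U1 U2 (eps : R) i :
  query_alg_wf A -> unitary U1 -> unitary U2 -> queries_close A U1 U2 eps ->
  `|complex.Re (qa_output A U1 i i) - complex.Re (qa_output A U2 i i)|
    <= 2 * ((qa_T A)%:R * eps).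
Proof.
move=> wfA U1_unitary U2_unitary Q_dist; have [_ [_ [_ W_iso]]] := wfA.
set psi1 := qa_W A *m qa_state A U1 (qa_T A).
set psi2 := qa_W A *m qa_state A U2 (qa_T A).
have psi_dist : vnorm (psi1 - psi2) <= (qa_T A)%:R * eps.
  by rewrite -mulmxBr vnorm_isometry //; exact: hybrid_bound.
have psi1_unit : vnorm psi1 <= 1 by rewrite vnorm_isometry // qa_state_vnorm.
have psi2_unit : vnorm psi2 <= 1 by rewrite vnorm_isometry // qa_state_vnorm.
apply: le_trans (ptrace2_outer_diag_dist i psi1_unit psi2_unit) _.
by rewrite ler_pM2l.
Qed.

(* Self-adjointness makes both branches of a query use the oracle itself, so the two queries
   differ by [(U1 - U2) *t P]. *)
Lemma queries_close_selfadjoint A U1 U2 (E : 'M[C]_(N + k)) (d e : R) :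
  query_alg_wf A -> mxadj U1 = U1 -> mxadj U2 = U2 ->
  0 <= d <= e ^+ 2 -> 0 <= e -> orth_proj E ->
  mxadj (U1 - U2) *m (U1 - U2) = d%:C *: E -> queries_close A U1 U2 e.
Proof.
move=> [_ [_ [P_proj _]]] U1a U2a d_bound e_ge0 E_proj UU t lt_tT x.
have [PP Pa] := P_proj t lt_tT.
have -> : query_op A U1 t - query_op A U2 t = (U1 - U2) *t qa_P A t.
  by rewrite /query_op U1a U2a !if_same opprD addrACA subrr addr0 tensmxBl.
apply: vnorm_contraction d_bound e_ge0 (orth_proj_tens E_proj (P_proj t lt_tT)) _.
by rewrite mxadj_tens tensmx_mul UU Pa PP tensmxZl.
Qed.

End QueryAlgorithm.

Section Dilation.
Variables (F : comPzRingType) (n k : nat).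
Implicit Types (a b : 'rV[F]_n) (z : F).

(* The corner [z] is [1] for an oracle; a difference of two oracles is a dilation with [z = 0]. *)
Definition dilation a b z : 'M[F]_(n + (n + k)) :=
  block_mx (diag_mx a) (row_mx (diag_mx b) 0)
           (col_mx (diag_mx b) 0) (block_mx (- diag_mx a) 0 0 z%:M).

Lemma tr_dilation a b z : (dilation a b z)^T = dilation a b z.
Proof.
rewrite /dilation tr_block_mx tr_row_mx tr_col_mx tr_block_mx linearN /=.
by rewrite !tr_diag_mx !trmx0 tr_scalar_mx.
Qed.

Lemma dilationB a b z a' b' z' :
  dilation a b z - dilation a' b' z' = dilation (a - a') (b - b') (z - z').
Proof.
rewrite /dilation opp_block_mx add_block_mx opp_row_mx opp_col_mx opp_block_mx.
by rewrite add_row_mx add_col_mx add_block_mx !oppr0 !addr0 -opprD !raddfB.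
Qed.

Lemma diag_mx_comm a b : diag_mx a *m diag_mx b = diag_mx b *m diag_mx a.
Proof. by rewrite !mulmx_diag; congr diag_mx; apply/rowP => j; rewrite !mxE mulrC. Qed.

Lemma dilation_sqr a b z :
  let w := \row_i (a 0 i ^+ 2 + b 0 i ^+ 2) in
  dilation a b z *m dilation a b z = diag_mx (row_mx w (row_mx w (const_mx (z ^+ 2)))).
Proof.
move=> w; have ab2 : diag_mx a *m diag_mx a + diag_mx b *m diag_mx b = diag_mx w.
  by rewrite !mulmx_diag -raddfD /=; congr diag_mx; apply/rowP => j; rewrite !mxE !expr2.
rewrite /dilation !diag_mx_row diag_const_mx mulmx_block.
rewrite mul_row_col mul_mx_row mul_row_block mul_col_mx mul_block_col mul_col_row mulmx_block.
rewrite !mulmx0 !mul0mx !addr0 !add0r mulmxN mulNmx mulNmx mulmxN opprK diag_mx_comm.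
rewrite add_row_mx add_col_mx add_block_mx !subrr !add0r row_mx0 col_mx0.
by rewrite ab2 addrC ab2 -scalar_mxM -expr2.
Qed.

End Dilation.

Section Oracle.
Variables (R : realType) (n k : nat).
Local Notation C := R[i].
Implicit Types a b : 'rV[R]_n.

Definition oracle a b : 'M[C]_(n + (n + k)) := map_mx (real_complex R) (dilation k a b 1).

Lemma mxadj_oracle a b : mxadj (oracle a b) = oracle a b.
Proof. by rewrite mxadj_real tr_dilation. Qed.

Lemma oracle_block_encoding a b :
  (forall i, a 0 i ^+ 2 + b 0 i ^+ 2 = 1) -> block_encoding (oracle a b) (rdiag a).
Proof.
move=> ab1; split; last by rewrite -map_ulsubmx block_mxKul map_diag_mx.
have UU : oracle a b *m oracle a b = 1%:M.
  rewrite -map_mxM dilation_sqr /=.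
  have -> : \row_i (a 0 i ^+ 2 + b 0 i ^+ 2) = const_mx 1 by apply/rowP => i; rewrite !mxE ab1.
  by rewrite expr1n !row_mx_const diag_const_mx map_mx1.
by rewrite /unitary mxadj_oracle UU.
Qed.

Lemma oracle_dist a b a' b' :
  let d := \row_i ((a - a') 0 i ^+ 2 + (b - b') 0 i ^+ 2) in
  mxadj (oracle a b - oracle a' b') *m (oracle a b - oracle a' b') = rdiag (row_mx d (row_mx d 0)).
Proof.
move=> d; rewrite -map_mxB mxadj_real -map_mxM dilationB tr_dilation dilation_sqr.
by rewrite subrr expr0n map_diag_mx.
Qed.

End Oracle.

Section DiagonalGibbs.
Variables (R : realType) (n k : nat).
Local Notation C := R[i].

Lemma spectral_rdiag (l : 'rV[R]_n) : spectral (rdiag l) 1%:M l.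
Proof. by split; rewrite ?/unitary mxadj1 ?mulmx1 ?mul1mx. Qed.

Lemma rdiag_sqr (a : 'rV[R]_n) : rdiag a *m rdiag a = rdiag (\row_i (a 0 i ^+ 2)).
Proof. by rewrite /rdiag mulmx_diag; congr diag_mx; apply/rowP => j; rewrite !mxE -rmorphM. Qed.

Lemma prepares_gibbs_diag (beta : R) (A : query_alg R n k) (U : 'M[C]_(n + k))
    (a : 'rV[R]_n) i :
  prepares_gibbs beta A -> (forall j, 0 <= a 0 j) -> block_encoding U (rdiag a) ->
  `|complex.Re (qa_output A U i i)
    - expR (- (beta * a 0 i ^+ 2)) / \sum_j expR (- (beta * a 0 j ^+ 2))| <= 1 / 100%:R.
Proof.
move=> gibbsA a_ge0 U_be.
pose f x := expR (- (beta * x)); pose a2 := \row_j (a 0 j ^+ 2).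
have S_sqrt : is_sqrt (rdiag a) (rdiag a2).
  by split; [exists 1%:M, a; split; [exact: spectral_rdiag | exact: a_ge0] | exact: rdiag_sqr].
have G_gibbs : mxfun f (rdiag a2) (rdiag (map_mx f a2)).
  by exists 1%:M, a2; rewrite mxadj1 mul1mx mulmx1; split; first exact: spectral_rdiag.
have [t [tn t_le]] := gibbsA _ _ U _ S_sqrt U_be G_gibbs.
apply: le_trans t_le; move: (trnorm_diag_le i tn).
move: (qa_output A U) => out.
rewrite /rdiag mxtrace_diag !mxE eqxx mulr1n.
under eq_bigr do rewrite !mxE.
rewrite -rmorph_sum -fmorphV -rmorphM mulrC.
by case: (out i i) => x y.
Qed.

End DiagonalGibbs.

Lemma sqr_subr_sqrtr_le (F : rcfType) (p v : F) :
  0 < p -> 0 <= v -> (p - Num.sqrt v) ^+ 2 <= (p ^+ 2 - v) ^+ 2 / p ^+ 2.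
Proof.
move=> p_gt0 v_ge0; rewrite ler_pdivlMr ?exprn_gt0 //.
have q_ge0 := sqrtr_ge0 v.
rewrite -{2}(sqr_sqrtr v_ge0) subr_sqr exprMn ler_wpM2l ?sqr_ge0 //; nra.
Qed.

Lemma expR_ratio_gap (R : realType) (beta x y : R) :
  beta * (y - x) = 1 ->
  2 / 3 <= expR (- (beta * x)) / (expR (- (beta * x)) + expR (- (beta * y))).
Proof.
move=> gap.
have -> : - (beta * y) = - (beta * x) + (- 1) by rewrite -gap; ring.
rewrite expRD; set E := expR (- (beta * x)); set e := expR (-1).
have E_gt0 : 0 < E := expR_gt0 _.
have e_half : e <= 1 / 2.
  have e1 : e * expR 1 = 1 by rewrite -expRD addNr expR0.
  have := expR_ge1Dx (1 : R); have := expR_gt0 (-1 : R); rewrite -/e; nra.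
rewrite ler_pdivlMr; last by rewrite addr_gt0 // mulr_gt0 // expR_gt0.
have := expR_gt0 (-1 : R); rewrite -/e; nra.
Qed.

Lemma distinguishing_bound (F : realFieldType) (r0 r1 q eps : F) :
  `|r0 - r1| <= 2 * eps -> `|r0 - 1 / 2| <= 1 / 100 -> `|r1 - q| <= 1 / 100 -> 2 / 3 <= q ->
  11 / 150 <= eps.
Proof. by rewrite !ler_norml => /andP[? ?] /andP[? ?] /andP[? ?] ?; lra. Qed.

Section TwoLevelProbe.
Variables (R : realType) (k : nat).
Local Notation C := R[i].
Local Notation "x %:C" := (real_complex R x).

Definition pair_row (x y : R) : 'rV[R]_2 := \row_i [:: x; y]`_i.

Definition probe (c s : R) : 'M[C]_(2 + (2 + k)) :=
  oracle k (pair_row (3 / 5) c) (pair_row (4 / 5) s).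

Definition shifted_probe (b : R) : 'M[C]_(2 + (2 + k)) :=
  probe (Num.sqrt ((3 / 5) ^+ 2 + b)) (Num.sqrt ((4 / 5) ^+ 2 - b)).

Definition second_level_proj : 'M[C]_(2 + (2 + k)) :=
  rdiag (row_mx (pair_row 0 1) (row_mx (pair_row 0 1) 0)).

Lemma probe_block_encoding c s :
  c ^+ 2 + s ^+ 2 = 1 -> block_encoding (probe c s) (rdiag (pair_row (3 / 5) c)).
Proof. by move=> cs; apply: oracle_block_encoding => -[[|[|//]] ?]; rewrite !mxE //=; lra. Qed.

Lemma orth_proj_second_level : orth_proj second_level_proj.
Proof.
apply: orth_proj_rdiag => i; rewrite mxE; case: split => j; rewrite ?mxE; last case: split => {}j;
  by rewrite ?mxE; case: j => [[|[|//]] ?] /=; rewrite ?mulr0 ?mulr1.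
Qed.

Lemma probe_dist c s c' s' :
  mxadj (probe c s - probe c' s') *m (probe c s - probe c' s') =
  ((c - c') ^+ 2 + (s - s') ^+ 2)%:C *: second_level_proj.
Proof.
rewrite oracle_dist; set e := (c - c') ^+ 2 + (s - s') ^+ 2.
have -> : \row_i ((pair_row (3 / 5) c - pair_row (3 / 5) c') 0 i ^+ 2 +
                  (pair_row (4 / 5) s - pair_row (4 / 5) s') 0 i ^+ 2) = e *: pair_row 0 1.
  by apply/rowP => -[[|[|//]] ?]; rewrite !mxE /= ?subrr ?expr0n ?addr0 ?mulr0 ?mulr1.
rewrite /second_level_proj -[0 : 'rV_k](scaler0 _ e) -!scale_row_mx.
by rewrite /rdiag map_mxZ scaler0 linearZ.
Qed.

Lemma probe_perturbation (b : R) : 0 < b <= 1 / 4 ->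
  (3 / 5 - Num.sqrt ((3 / 5) ^+ 2 + b)) ^+ 2 + (4 / 5 - Num.sqrt ((4 / 5) ^+ 2 - b)) ^+ 2
    <= (3 * b) ^+ 2.
Proof.
move=> /andP[b_gt0 b_le].
have c_bound : (3 / 5 - Num.sqrt ((3 / 5) ^+ 2 + b)) ^+ 2 <= 25 / 9 * b ^+ 2.
  have -> : 25 / 9 * b ^+ 2 = ((3 / 5) ^+ 2 - ((3 / 5) ^+ 2 + b)) ^+ 2 / (3 / 5) ^+ 2 by field.
  by apply: sqr_subr_sqrtr_le; nra.
have s_bound : (4 / 5 - Num.sqrt ((4 / 5) ^+ 2 - b)) ^+ 2 <= 25 / 16 * b ^+ 2.
  have -> : 25 / 16 * b ^+ 2 = ((4 / 5) ^+ 2 - ((4 / 5) ^+ 2 - b)) ^+ 2 / (4 / 5) ^+ 2 by field.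
  by apply: sqr_subr_sqrtr_le; nra.
nra.
Qed.

Lemma probe_output_dist (A : query_alg R 2 (2 + k)) (b : R) :
  query_alg_wf A -> 0 < b <= 1 / 4 ->
  `|complex.Re (qa_output A (probe (3 / 5) (4 / 5)) 0 0)
    - complex.Re (qa_output A (shifted_probe b) 0 0)| <= 2 * ((qa_T A)%:R * (3 * b)).
Proof.
move=> wfA b_bound; have /andP[b_gt0 b_le] := b_bound.
have cs0 : (3 / 5) ^+ 2 + (4 / 5) ^+ 2 = 1 :> R by lra.
have cs : Num.sqrt ((3 / 5) ^+ 2 + b) ^+ 2 + Num.sqrt ((4 / 5) ^+ 2 - b) ^+ 2 = 1.
  by rewrite !sqr_sqrtr; nra.
have [U0_unitary _] := probe_block_encoding cs0.
have [U_unitary _] := probe_block_encoding cs.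
apply: (qa_output_diag_dist 0 wfA U0_unitary U_unitary).
apply: (queries_close_selfadjoint wfA (mxadj_oracle _ _ _) (mxadj_oracle _ _ _) _ _
          orth_proj_second_level (probe_dist _ _ _ _)); last lra.
by rewrite addr_ge0 ?sqr_ge0 //= probe_perturbation.
Qed.

Lemma probe_gibbs (beta : R) (A : query_alg R 2 (2 + k)) c s :
  prepares_gibbs beta A -> 0 <= c -> c ^+ 2 + s ^+ 2 = 1 ->
  `|complex.Re (qa_output A (probe c s) 0 0) - expR (- (beta * (3 / 5) ^+ 2))
      / (expR (- (beta * (3 / 5) ^+ 2)) + expR (- (beta * c ^+ 2)))| <= 1 / 100.
Proof.
move=> gibbsA c_ge0 cs.
have := prepares_gibbs_diag 0 gibbsA _ (probe_block_encoding cs).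
rewrite big_ord_recr big_ord1 !mxE /=; apply.
by move=> -[[|[|//]] ?]; rewrite mxE //=; lra.
Qed.


Lemma probe_gibbs_half (beta : R) (A : query_alg R 2 (2 + k)) :
  prepares_gibbs beta A ->
  `|complex.Re (qa_output A (probe (3 / 5) (4 / 5)) 0 0) - 1 / 2| <= 1 / 100.
Proof.
move=> gibbsA.
have := probe_gibbs gibbsA (ltac:(lra) : 0 <= 3 / 5 :> R)
  (ltac:(lra) : (3 / 5) ^+ 2 + (4 / 5) ^+ 2 = 1 :> R).
set E := expR _; have E_gt0 : 0 < E := expR_gt0 _.
by have -> : E / (E + E) = 1 / 2 by field; lra.
Qed.

Lemma shifted_probe_gibbs (beta : R) (A : query_alg R 2 (2 + k)) :
  prepares_gibbs beta A -> 4 <= beta ->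
  exists2 q, 2 / 3 <= q & `|complex.Re (qa_output A (shifted_probe beta^-1) 0 0) - q| <= 1 / 100.
Proof.
move=> gibbsA beta_ge4.
pose c := Num.sqrt ((3 / 5) ^+ 2 + beta^-1); pose s := Num.sqrt ((4 / 5) ^+ 2 - beta^-1).
have b_bound : 0 < beta^-1 <= 1 / 4.
  by rewrite invr_gt0 (lt_le_trans _ beta_ge4) //= -[1 / 4]invf_div ?lef_pV2 ?posrE; lra.
have /andP[b_gt0 b_le] := b_bound.
have cs : c ^+ 2 + s ^+ 2 = 1 by rewrite !sqr_sqrtr; nra.
have c2 : beta * (c ^+ 2 - (3 / 5) ^+ 2) = 1.
  by rewrite sqr_sqrtr; [rewrite addrC addKr mulfV //; lra | nra].
exists (expR (- (beta * (3 / 5) ^+ 2))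
        / (expR (- (beta * (3 / 5) ^+ 2)) + expR (- (beta * c ^+ 2)))).
  exact: expR_ratio_gap c2.
exact: probe_gibbs gibbsA (sqrtr_ge0 _) cs.
Qed.

End TwoLevelProbe.

Theorem theorem2p52 (R : realType) :
  exists c : R, 0 < c /\
  forall beta : R, 4%:R <= beta ->
  exists N : nat, (0 < N)%N /\
  forall (k : nat), (N <= k)%N ->
  forall A : query_alg R N k,
    query_alg_wf A -> prepares_gibbs beta A ->
    c * beta <= (qa_T A)%:R.
Proof.
exists (1 / 50); split; first lra.
move=> beta beta_ge4; exists 2%N; split => //.
case=> [|[|k]] // _ A wfA gibbsA.
have b_bound : 0 < beta^-1 <= 1 / 4.
  by rewrite invr_gt0 (lt_le_trans _ beta_ge4) //= -[1 / 4]invf_div ?lef_pV2 ?posrE; lra.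
have [q q_ge gibbs_shifted] := shifted_probe_gibbs gibbsA beta_ge4.
have key := distinguishing_bound (probe_output_dist wfA b_bound) (probe_gibbs_half gibbsA)
  gibbs_shifted q_ge.
have -> : (qa_T A)%:R = (qa_T A)%:R * (3 * beta^-1) * (beta / 3) by field; lra.
by apply: le_trans (ler_wpM2r _ key); lra.
Qed.
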